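(* Let $R$ be a commutative ring with identity. Then: (1) If $M$ is a coprime $R$-module and $N$ is any $R$-module, then $\operatorname{Hom}_R(M,N)$ is a prime $R$-module. Conversely, if $N$ is an injective cogenerator and $\operatorname{Hom}_R(M,N)$ is prime, then $M$ is coprime. (2) If $R$ is Noetherian, $N$ is an injective cogenerator $R$-module and $M$ is a prime $R$-module, then $\operatorname{Hom}_R(M,N)$ is a coprime $R$-module. (3) If $M$ is a prime (resp. weakly prime, coprime, weakly coprime) $R$-module, then for every prime ideal $\mathcal P$ of $R$ the $R_{\mathcal P}$-module $M_{\mathcal P}$ is prime (resp. weakly prime, coprime, weakly coprime). (4) An injective cogenerator $R$-module which is reduced (resp. weakly prime) is coreduced (resp. weakly coprime). (5) A progenerator $R$-module which is coreduced (resp. weakly coprime) is reduced (resp. weakly prime).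
   Context: All rings are commutative with identity and modules are unital. An $R$-module $M$ is: prime if for all ideals $I$ of $R$ and all $m\in M$, $Im=0$ implies $m=0$ or $IM=0$; weakly prime if for all ideals $I,J$ of $R$ and $m\in M$, $IJm=0$ implies $Im=0$ or $Jm=0$; reduced if for all ideals $I$ and $m\in M$, $I^2m=0$ implies $Im=0$; coprime if for all ideals $I$ of $R$, $IM=0$ or $IM=M$; weakly coprime if for all ideals $I,J$ of $R$, $IJM=IM$ or $IJM=JM$; coreduced if $IM=I^2M$ for all ideals $I$. A progenerator is a finitely generated projective generator. *)

From HB Require Import structures.
From mathcomp Require Import all_boot all_algebra.
From mathcomp Require Import boolp classical_sets functions.

Set Implicit Arguments.
Unset Strict Implicit.
Unset Printing Implicit Defensive.

Import GRing.Theory.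
Local Open Scope ring_scope.

Section Ideals.
Variable R : comPzRingType.

Definition ideal (I : R -> Prop) : Prop :=
  [/\ I 0, (forall x y, I x -> I y -> I (x + y)) & (forall r x, I x -> I (r * x))].

Definition prime_ideal (P : R -> Prop) : Prop :=
  [/\ ideal P, ~ P 1 & (forall a b, P (a * b) -> P a \/ P b)].

Definition idealM (I J : R -> Prop) : R -> Prop := fun x =>
  exists s : seq (R * R),
    (forall p, p \in s -> I p.1 /\ J p.2) /\ x = \sum_(p <- s) p.1 * p.2.

Definition ideal_gen (s : seq R) : R -> Prop := fun x =>
  exists c : seq R, x = \sum_(i < size s) c`_i * s`_i.

Definition noetherian : Prop :=
  forall I : R -> Prop, ideal I -> exists s : seq R, forall x, I x <-> ideal_gen s x.

End Ideals.

Section Modules.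
Variable R : comPzRingType.
Variable M : lmodType R.

Definition modM (I : R -> Prop) : M -> Prop := fun y =>
  exists s : seq (R * M),
    (forall p, p \in s -> I p.1) /\ y = \sum_(p <- s) p.1 *: p.2.

Definition ann_elt (I : R -> Prop) (m : M) : Prop := forall a, I a -> a *: m = 0.

Definition prime_module : Prop :=
  forall (I : R -> Prop) (m : M), ideal I -> ann_elt I m ->
    m = 0 \/ (forall y, modM I y -> y = 0).

Definition weakly_prime_module : Prop :=
  forall (I J : R -> Prop) (m : M), ideal I -> ideal J ->
    ann_elt (idealM I J) m -> ann_elt I m \/ ann_elt J m.

Definition reduced_module : Prop :=
  forall (I : R -> Prop) (m : M), ideal I ->
    ann_elt (idealM I I) m -> ann_elt I m.

Definition coprime_module : Prop :=
  forall I : R -> Prop, ideal I ->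
    (forall y, modM I y -> y = 0) \/ (forall y, modM I y).

Definition weakly_coprime_module : Prop :=
  forall I J : R -> Prop, ideal I -> ideal J ->
    (forall y, modM (idealM I J) y <-> modM I y) \/
    (forall y, modM (idealM I J) y <-> modM J y).

Definition coreduced_module : Prop :=
  forall I : R -> Prop, ideal I ->
    forall y, modM I y <-> modM (idealM I I) y.

Definition injective_module : Prop :=
  forall (A B : lmodType R) (f : {linear A -> B}) (g : {linear A -> M}),
    injective f -> exists h : {linear B -> M}, forall a, h (f a) = g a.

Definition cogenerator_module : Prop :=
  forall (A : lmodType R) (a : A), a <> 0 ->
    exists f : {linear A -> M}, f a <> 0.

Definition finitely_generated_module : Prop :=
  exists s : seq M, forall x : M,
    exists c : seq R, x = \sum_(i < size s) c`_i *: s`_i.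

Definition projective_module : Prop :=
  forall (B C : lmodType R) (g : {linear B -> C}) (f : {linear M -> C}),
    (forall c, exists b, g b = c) ->
    exists h : {linear M -> B}, forall x, g (h x) = f x.

Definition generator_module : Prop :=
  forall (X : lmodType R) (x : X),
    exists s : seq ({linear M -> X} * M), x = \sum_(p <- s) p.1 p.2.

Definition progenerator_module : Prop :=
  [/\ finitely_generated_module, projective_module & generator_module].

End Modules.

(* Hom_R(M, N) as an R-module (submodule of the function module M -> N) *)
Section HomMod.
Variable R : comPzRingType.
Variables M N : lmodType R.

Definition is_hom : {pred M -> N} := fun f => `[< linear f >].

Lemma is_hom_subsemimod_closed : subsemimod_closed is_hom.
Proof.
split; [split|].
- by apply/asboolP => a u v /=; rewrite scaler0 addr0.
- move=> f g /asboolP Hf /asboolP Hg; apply/asboolP => a u v /=.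
  have -> : (f + g) (a *: u + v) = f (a *: u + v) + g (a *: u + v) by [].
  have -> : (f + g) u = f u + g u by [].
  have -> : (f + g) v = f v + g v by [].
  rewrite Hf Hg scalerDr; rewrite -!addrA; congr (_ + _); rewrite !addrA;
  congr (_ + _); by rewrite addrC.
- move=> a f /asboolP Hf; apply/asboolP => b u v /=.
  have E : forall w, (a *: f) w = a *: f w by [].
  by rewrite !E Hf scalerDr !scalerA mulrC.
Qed.

Definition HomMod := {f : M -> N | is_hom f}.
HB.instance Definition _ := [isSub of HomMod for @sval _ _].
HB.instance Definition _ := [Choice of HomMod by <:].
HB.instance Definition _ :=
  @GRing.SubChoice_isSubLmodule.Build R (M -> N) is_hom HomMod is_hom_subsemimod_closed.

End HomMod.

(* Localization at a prime ideal P, via its standard characterization  *)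
(* (Atiyah-Macdonald): these properties determine R_P and M_P up to    *)
(* unique isomorphism.                                                 *)
Section Localization.
Variable R : comPzRingType.
Variable P : R -> Prop.

Definition is_localization_ring (S : comPzRingType) (phi : {rmorphism R -> S}) : Prop :=
  [/\ (forall s, ~ P s -> exists t, phi s * t = 1),
      (forall x : S, exists r s, ~ P s /\ x * phi s = phi r) &
      (forall r, phi r = 0 -> exists u, ~ P u /\ u * r = 0)].

Definition is_localization_module (M : lmodType R)
    (S : comPzRingType) (phi : {rmorphism R -> S})
    (M' : lmodType S) (psi : M -> M') : Prop :=
  [/\ (forall m1 m2, psi (m1 + m2) = psi m1 + psi m2),
      (forall r m, psi (r *: m) = phi r *: psi m),
      (forall y : M', exists m s, ~ P s /\ phi s *: y = psi m) &
      (forall m, psi m = 0 -> exists u, ~ P u /\ u *: m = 0)].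

End Localization.

From HB Require Import structures.
From mathcomp Require Import all_boot all_algebra.
From mathcomp Require Import boolp classical_sets functions.

(* A cogenerator N separates every point from every submodule (through the
   quotient), so "y lies in IM" becomes "every map to N killing IM kills y";
   and a map kills IM exactly when all its values are annihilated by I.  This
   trades coprime-type conditions on one side for prime-type conditions on the
   other.  An injective N lets every map from a prime module M factor through
   multiplication by any a with aM <> 0, which is injective on M.  A generator
   Q recovers an ideal from IQ, because the images of the maps Q -> R contain
   1.  The localization statements pull ideals of R_P back to R and clear
   denominators, which are units of R_P. *)

Set Implicit Arguments.
Unset Strict Implicit.
Unset Printing Implicit Defensive.

Import GRing.Theory.
Local Open Scope ring_scope.

Section Ideals.
Variable R : comPzRingType.
Implicit Types (I J : R -> Prop) (a b x y : R).

Lemma ideal0 I : ideal I -> I 0. Proof. by case. Qed.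

Lemma idealD I x y : ideal I -> I x -> I y -> I (x + y).
Proof. by case=> _ + _; apply. Qed.

Lemma idealMl I a x : ideal I -> I x -> I (a * x).
Proof. by case=> _ _; apply. Qed.

Lemma idealMr I a x : ideal I -> I x -> I (x * a).
Proof. by rewrite mulrC; apply: idealMl. Qed.

Lemma ideal_sum I (T : eqType) (s : seq T) (F : T -> R) :
  ideal I -> (forall t, t \in s -> I (F t)) -> I (\sum_(t <- s) F t).
Proof.
move=> HI IF; rewrite big_seq; apply: (big_ind I) => //.
- exact: ideal0.
- by move=> ? ?; apply: idealD.
Qed.

Lemma idealM_mul I J a b : I a -> J b -> idealM I J (a * b).
Proof.
by move=> Ia Jb; exists [:: (a, b)]; rewrite big_seq1; split=> // p; rewrite inE => /eqP ->.
Qed.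

Lemma idealM_ideal I J : ideal I -> ideal J -> ideal (idealM I J).
Proof.
move=> HI HJ; split.
- by exists [::]; rewrite big_nil.
- move=> _ _ [s [Hs ->]] [t [Ht ->]]; exists (s ++ t); rewrite big_cat; split=> // p.
  by rewrite mem_cat => /orP[/Hs|/Ht].
- move=> r _ [s [Hs ->]]; exists [seq (r * p.1, p.2) | p <- s]; split.
  + by move=> _ /mapP[p /Hs[Ip Jp] ->]; split=> //; apply: idealMl.
  + by rewrite big_map mulr_sumr; apply: eq_bigr => p _; rewrite mulrA.
Qed.

Lemma idealM_subl I J x : ideal I -> idealM I J x -> I x.
Proof. by move=> HI [s [Hs ->]]; apply: ideal_sum => // p /Hs[Ip _]; apply: idealMr. Qed.

Lemma idealM_subr I J x : ideal J -> idealM I J x -> J x.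
Proof. by move=> HJ [s [Hs ->]]; apply: ideal_sum => // p /Hs[_ Jp]; apply: idealMl. Qed.

Definition principal_ideal a : R -> Prop := fun x => exists c, x = c * a.

Lemma principal_ideal_ideal a : ideal (principal_ideal a).
Proof.
split; first by exists 0; rewrite mul0r.
- by move=> _ _ [c ->] [d ->]; exists (c + d); rewrite mulrDl.
- by move=> r _ [c ->]; exists (r * c); rewrite mulrA.
Qed.

Lemma principal_ideal_gen a : principal_ideal a a.
Proof. by exists 1; rewrite mul1r. Qed.

End Ideals.

Lemma ideal_preim (R S : comPzRingType) (phi : {rmorphism R -> S}) (I : S -> Prop) :
  ideal I -> ideal (fun r => I (phi r)).
Proof.
case=> I0 ID IM; split=> [|x y|r x]; rewrite ?rmorph0 ?rmorphD ?rmorphM //.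
- exact: ID.
- exact: IM.
Qed.

Section SubmoduleOfIdeal.
Variables (R : comPzRingType) (M : lmodType R).
Implicit Types (I J : R -> Prop) (x y : M).

Lemma modM0 I : modM I (0 : M).
Proof. by exists [::]; rewrite big_nil. Qed.

Lemma modMD I x y : modM I x -> modM I y -> modM I (x + y).
Proof.
move=> [s [Hs ->]] [t [Ht ->]]; exists (s ++ t); rewrite big_cat; split=> // p.
by rewrite mem_cat => /orP[/Hs|/Ht].
Qed.

Lemma modMZ I r x : ideal I -> modM I x -> modM I (r *: x).
Proof.
move=> HI [s [Hs ->]]; exists [seq (r * p.1, p.2) | p <- s]; split.
- by move=> _ /mapP[p /Hs Ip ->]; apply: idealMl.
- by rewrite big_map scaler_sumr; apply: eq_bigr => p _; rewrite scalerA.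
Qed.

Lemma modM_scale I a x : I a -> modM I (a *: x).
Proof.
by move=> Ia; exists [:: (a, x)]; rewrite big_seq1; split=> // p; rewrite inE => /eqP ->.
Qed.

Lemma modM_sub I J y : (forall a, I a -> J a) -> modM I y -> modM J y.
Proof. by move=> IJ [s [Hs ->]]; exists s; split=> // p /Hs /IJ. Qed.

Lemma modM_ind I (K : M -> Prop) y :
  K 0 -> (forall x y, K x -> K y -> K (x + y)) -> (forall a x, I a -> K (a *: x)) ->
  modM I y -> K y.
Proof.
move=> K0 KD KZ [s [Hs ->]]; rewrite big_seq.
by apply: (big_ind K) => // p /Hs; apply: KZ.
Qed.

Lemma modM_eq0 I y : (forall x, ann_elt I x) -> modM I y -> y = 0.
Proof.
move=> IM0; apply: (modM_ind (K := fun z => z = 0)) => [|? ? -> ->|a x Ia] //.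
- by rewrite addr0.
- exact: IM0.
Qed.

Lemma modM_scale_notin I (K : M -> Prop) y :
  K 0 -> (forall x y, K x -> K y -> K (x + y)) -> modM I y -> ~ K y ->
  exists a x, I a /\ ~ K (a *: x).
Proof.
move=> K0 KD Iy Ky; apply: contrapT => noK.
have KZ a x : I a -> K (a *: x).
  by move=> Ia; apply: contrapT => Kax; apply: noK; exists a, x.
exact: Ky (modM_ind K0 KD KZ Iy).
Qed.

Lemma ann_idealM I J x :
  (forall a b, I a -> J b -> (a * b) *: x = 0) -> ann_elt (idealM I J) x.
Proof.
move=> IJx _ [s [Hs ->]]; rewrite scaler_suml big1_seq // => p /andP[_ /Hs[Ip Jp]].
exact: IJx.
Qed.

Lemma prime_module_scale_eq0 : prime_module M ->
  forall a x y, a *: x = 0 -> x = 0 \/ a *: y = 0.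
Proof.
move=> pM a x y ax0.
have [] := pM _ x (principal_ideal_ideal a); [|by left|].
- by move=> _ [c ->]; rewrite -scalerA ax0 scaler0.
- by move=> aM0; right; apply/aM0/modM_scale/principal_ideal_gen.
Qed.

Lemma weakly_prime_module_scale_eq0 : weakly_prime_module M ->
  forall a b x, (a * b) *: x = 0 -> a *: x = 0 \/ b *: x = 0.
Proof.
move=> wM a b x abx0.
have [] := wM _ _ x (principal_ideal_ideal a) (principal_ideal_ideal b).
- apply: ann_idealM => _ _ [c ->] [d ->].
  by rewrite mulrACA -scalerA abx0 scaler0.
- by move=> ax0; left; apply/ax0/principal_ideal_gen.
- by move=> bx0; right; apply/bx0/principal_ideal_gen.
Qed.

End SubmoduleOfIdeal.

Lemma linear_kills_modM (R : comPzRingType) (M N : lmodType R)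
    (f : {linear M -> N}) (I : R -> Prop) :
  (forall x, modM I x -> f x = 0) <-> (forall x, ann_elt I (f x)).
Proof.
split=> [fI x a Ia | Ifx x]; first by rewrite -linearZ_LR fI //; apply: modM_scale.
apply: (modM_ind (K := fun z => f z = 0)) => [|y z /= fy fz|a y Ia] /=.
- exact: linear0.
- by rewrite linearD fy fz addr0.
- by rewrite linearZ_LR Ifx.
Qed.

Record submodule (R : comPzRingType) (M : lmodType R) := Submodule {
  submod_mem :> M -> Prop;
  submod0 : submod_mem 0;
  submodD : forall x y, submod_mem x -> submod_mem y -> submod_mem (x + y);
  submodZ : forall r x, submod_mem x -> submod_mem (r *: x) }.

Definition modM_submodule (R : comPzRingType) (M : lmodType R) (I : R -> Prop)
    (HI : ideal I) : submodule M :=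
  Submodule (@modM0 R M I) (@modMD R M I) (fun r x => @modMZ R M I r x HI).

Section Quotient.
Variables (R : comPzRingType) (M : lmodType R) (K : submodule M).

Lemma submodN x : K x -> K (- x).
Proof. by rewrite -scaleN1r; apply: submodZ. Qed.

Lemma submod_subrC x y : K (x - y) -> K (y - x).
Proof. by move=> Kxy; rewrite -opprB; apply: submodN. Qed.

(* The quotient M/K is represented by a choice of one element in each coset. *)
Definition coset_repr (x : M) : M := xget 0 [set y | K (x - y)].

Lemma coset_repr_sub x : K (x - coset_repr x).
Proof. by apply: (@xgetI _ 0 [set y | K (x - y)] x); rewrite /= subrr; apply: submod0. Qed.

Lemma coset_repr_eq x y : K (x - y) -> coset_repr x = coset_repr y.
Proof.
move=> Kxy; congr xget; apply: funext => z; apply: propext; split=> /= Kz.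
- by rewrite -(subrKA x); apply: submodD => //; apply: submod_subrC.
- by rewrite -(subrKA y); apply: submodD.
Qed.

Lemma coset_repr_idem x : coset_repr (coset_repr x) = coset_repr x.
Proof. by apply/coset_repr_eq/submod_subrC/coset_repr_sub. Qed.

Record quotmod := QuotMod { quotmod_val : M; _ : coset_repr quotmod_val == quotmod_val }.
HB.instance Definition _ := [isSub for quotmod_val].
HB.instance Definition _ := [Choice of quotmod by <:].

Definition quotmod_pi (x : M) : quotmod := QuotMod (introT eqP (coset_repr_idem x)).

Lemma quotmod_pi_eqP x y : quotmod_pi x = quotmod_pi y <-> K (x - y).
Proof.
split=> [/(congr1 val) /= Exy | Kxy]; last by apply: val_inj; apply: coset_repr_eq.
rewrite -(subrKA (coset_repr x)) {2}Exy.
by apply: submodD; [|apply: submod_subrC]; apply: coset_repr_sub.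
Qed.

Lemma quotmod_ind (P : quotmod -> Prop) : (forall x, P (quotmod_pi x)) -> forall q, P q.
Proof.
move=> Ppi q; suff -> : q = quotmod_pi (val q) by [].
by apply: val_inj; rewrite /= (eqP (valP q)).
Qed.

Definition quotmod_add (p q : quotmod) := quotmod_pi (val p + val q).
Definition quotmod_opp (q : quotmod) := quotmod_pi (- val q).
Definition quotmod_scale r (q : quotmod) := quotmod_pi (r *: val q).

Lemma quotmod_pi_sub x : K (val (quotmod_pi x) - x).
Proof. exact/submod_subrC/coset_repr_sub. Qed.

Lemma quotmod_addE x y : quotmod_add (quotmod_pi x) (quotmod_pi y) = quotmod_pi (x + y).
Proof.
apply/quotmod_pi_eqP; rewrite opprD addrACA.
by apply: submodD; apply: quotmod_pi_sub.
Qed.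

Lemma quotmod_oppE x : quotmod_opp (quotmod_pi x) = quotmod_pi (- x).
Proof.
by apply/quotmod_pi_eqP; rewrite -opprD; apply: submodN; apply: quotmod_pi_sub.
Qed.

Lemma quotmod_scaleE r x : quotmod_scale r (quotmod_pi x) = quotmod_pi (r *: x).
Proof. by apply/quotmod_pi_eqP; rewrite -scalerBr; apply: submodZ; apply: quotmod_pi_sub. Qed.

Lemma quotmod_addA : associative quotmod_add.
Proof.
by elim/quotmod_ind=> x; elim/quotmod_ind=> y; elim/quotmod_ind=> z;
  rewrite !quotmod_addE addrA.
Qed.

Lemma quotmod_addC : commutative quotmod_add.
Proof. by elim/quotmod_ind=> x; elim/quotmod_ind=> y; rewrite !quotmod_addE addrC. Qed.

Lemma quotmod_add0 : left_id (quotmod_pi 0) quotmod_add.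
Proof. by elim/quotmod_ind=> x; rewrite quotmod_addE add0r. Qed.

Lemma quotmod_addN : left_inverse (quotmod_pi 0) quotmod_opp quotmod_add.
Proof. by elim/quotmod_ind=> x; rewrite quotmod_oppE quotmod_addE addNr. Qed.

HB.instance Definition _ :=
  GRing.isZmodule.Build quotmod quotmod_addA quotmod_addC quotmod_add0 quotmod_addN.

Lemma quotmod_piD x y : quotmod_pi x + quotmod_pi y = quotmod_pi (x + y).
Proof. exact: quotmod_addE. Qed.

Lemma quotmod_scaleA a b q : quotmod_scale a (quotmod_scale b q) = quotmod_scale (a * b) q.
Proof. by elim/quotmod_ind: q => x; rewrite !quotmod_scaleE scalerA. Qed.

Lemma quotmod_scale1 : left_id 1 quotmod_scale.
Proof. by elim/quotmod_ind=> x; rewrite quotmod_scaleE scale1r. Qed.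

Lemma quotmod_scaleDr : right_distributive quotmod_scale +%R.
Proof.
move=> a; elim/quotmod_ind=> x; elim/quotmod_ind=> y.
by rewrite quotmod_piD !quotmod_scaleE quotmod_piD scalerDr.
Qed.

Lemma quotmod_scaleDl q : {morph quotmod_scale^~ q : a b / a + b}.
Proof.
move=> a b; elim/quotmod_ind: q => x.
by rewrite !quotmod_scaleE quotmod_piD scalerDl.
Qed.

HB.instance Definition _ := GRing.Zmodule_isLmodule.Build R quotmod
  quotmod_scaleA quotmod_scale1 quotmod_scaleDr quotmod_scaleDl.

Lemma quotmod_piZ r x : r *: quotmod_pi x = quotmod_pi (r *: x).
Proof. exact: quotmod_scaleE. Qed.

Lemma quotmod_pi_linear : linear quotmod_pi.
Proof. by move=> a x y; rewrite quotmod_piZ quotmod_piD. Qed.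

HB.instance Definition _ :=
  GRing.isLinear.Build R M quotmod *:%R quotmod_pi quotmod_pi_linear.

Lemma quotmod_pi_eq0 x : quotmod_pi x = 0 <-> K x.
Proof. by rewrite -(linear0 quotmod_pi) quotmod_pi_eqP subr0. Qed.

End Quotient.

Lemma cogenerator_separates (R : comPzRingType) (M N : lmodType R) (K : submodule M) y :
  cogenerator_module N -> ~ K y ->
  exists f : {linear M -> N}, (forall k, K k -> f k = 0) /\ f y <> 0.
Proof.
move=> cogN Ky.
have [|h hy] := cogN _ (quotmod_pi K y); first by move/quotmod_pi_eq0.
exists (h \o quotmod_pi K : {linear M -> N}); split=> // k /quotmod_pi_eq0 /= ->.
exact: linear0.
Qed.

Section Hom.
Variables (R : comPzRingType) (M N : lmodType R).
Implicit Types (f g : HomMod M N) (I : R -> Prop).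

Lemma hom_linear f : linear (val f).
Proof. exact/asboolP/(valP f). Qed.

Definition linear_of_hom f : {linear M -> N} :=
  HB.pack (val f) (GRing.isLinear.Build R M N *:%R (val f) (hom_linear f)).

Definition hom_of_linear (h : {linear M -> N}) : HomMod M N :=
  Sub (h : M -> N) (introT (asboolP _) (linearP h)).

Lemma hom_eq f g : val f =1 val g -> f = g.
Proof. by move=> fg; apply/val_inj/funext. Qed.

Lemma hom0 f : val f 0 = 0.
Proof. exact: (linear0 (linear_of_hom f)). Qed.

Lemma ann_hom I f : ann_elt I f <-> forall x, ann_elt I (val f x).
Proof.
split=> [If x a Ia | Ifx a Ia]; first by rewrite -[LHS]/(val (a *: f) x) If.
by apply: hom_eq => x; apply: Ifx.
Qed.

Lemma ann_homP I f : ann_elt I f <-> forall x, modM I x -> val f x = 0.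
Proof. by rewrite ann_hom -(linear_kills_modM (linear_of_hom f)). Qed.

Lemma hom_divisible a : injective_module N -> (forall x : M, a *: x = 0 -> x = 0) ->
  forall f, exists h, f = a *: h.
Proof.
move=> injN ax0 f; pose mul_a : {linear M -> M} := ( *:%R a).
have inj_a : injective mul_a.
  by move=> x y /eqP; rewrite -subr_eq0 -scalerBr => /eqP/ax0/eqP; rewrite subr_eq0 => /eqP.
have [h hE] := injN _ _ mul_a (linear_of_hom f) inj_a.
by exists (hom_of_linear h); apply: hom_eq => x; rewrite -[val f x]hE /= linearZ_LR.
Qed.

End Hom.

Lemma hom_prime_of_coprime (R : comPzRingType) (M N : lmodType R) :
  coprime_module M -> prime_module (HomMod M N).
Proof.
move=> cM I f HI If; case: (cM I HI) => [IM0 | IM_full].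
- by right=> g; apply: modM_eq0 => h; apply/ann_homP => x /IM0 ->; apply: hom0.
- by left; apply: hom_eq => x; rewrite ((ann_homP I f).1 If x (IM_full x)).
Qed.

Lemma coprime_of_hom_prime (R : comPzRingType) (M N : lmodType R) :
  cogenerator_module N -> prime_module (HomMod M N) -> coprime_module M.
Proof.
move=> cogN pH I HI; have [IM_full | /existsNP[y IMy]] := pselect (forall y : M, modM I y).
  by right.
have [f [fIM fy]] := cogenerator_separates (K := modM_submodule M HI) cogN IMy.
have [f0 | IH0] := pH I (hom_of_linear f) HI ((ann_homP I (hom_of_linear f)).2 fIM).
  by case: fy; have /= := congr1 (fun g => val g y) f0.
left=> z IMz; apply: contrapT => z0; have [g gz] := cogN _ z z0; apply: gz.
have Ig : ann_elt I (hom_of_linear g).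
  by move=> a Ia; apply: IH0; apply: modM_scale.
exact: (ann_homP I (hom_of_linear g)).1 Ig z IMz.
Qed.

Lemma hom_coprime_of_prime (R : comPzRingType) (M N : lmodType R) :
  injective_module N -> prime_module M -> coprime_module (HomMod M N).
Proof.
move=> injN pM I HI.
have [[a [x [Ia ax]]] | IM0] := pselect (exists a (x : M), I a /\ a *: x <> 0).
  right=> f; have [|h ->] := hom_divisible (a := a) injN _ f; last exact: modM_scale.
  by move=> y ay0; have [//|/ax] := prime_module_scale_eq0 pM x ay0.
have IM0' (y : M) : ann_elt I y.
  by move=> a Ia; apply: contrapT => ay; apply: IM0; exists a, y.
by left=> f; apply: modM_eq0 => g; apply/ann_homP => x /(modM_eq0 IM0') ->; apply: hom0.
Qed.

Section Localization.
Variables (R S : comPzRingType) (P : R -> Prop) (phi : {rmorphism R -> S}).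
Variables (M : lmodType R) (MP : lmodType S) (psi : M -> MP).
Hypothesis P_prime : prime_ideal P.
Hypothesis phi_loc : is_localization_ring P phi.
Hypothesis psi_loc : is_localization_module P phi psi.

Let phi_unit s : ~ P s -> exists t, phi s * t = 1.
Proof. by case: phi_loc => + _ _; apply. Qed.

Let phi_frac (x : S) : exists r s, ~ P s /\ x * phi s = phi r.
Proof. by case: phi_loc. Qed.

Let psiD m1 m2 : psi (m1 + m2) = psi m1 + psi m2.
Proof. by case: psi_loc. Qed.

Let psiZ r m : psi (r *: m) = phi r *: psi m.
Proof. by case: psi_loc. Qed.

Let psi_frac (y : MP) : exists m s, ~ P s /\ phi s *: y = psi m.
Proof. by case: psi_loc. Qed.

Let notP_mul s t : ~ P s -> ~ P t -> ~ P (s * t).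
Proof. by case: P_prime => _ _ Pst ns nt /Pst[]. Qed.

Let psi0 : psi 0 = 0.
Proof. by apply: (addrI (psi 0)); rewrite -psiD !addr0. Qed.

Let psi_sum (s : seq (R * M)) :
  psi (\sum_(p <- s) p.1 *: p.2) = \sum_(p <- s) phi p.1 *: psi p.2.
Proof.
elim: s => [|p s IHs]; first by rewrite !big_nil psi0.
by rewrite !big_cons psiD IHs psiZ.
Qed.

Let unit_scaleK s (y : MP) : ~ P s -> phi s *: y = 0 -> y = 0.
Proof.
move=> ns sy0; have [t st1] := phi_unit ns.
by rewrite -[y]scale1r -st1 mulrC -scalerA sy0 scaler0.
Qed.

Let unit_scale_psi s m (y : MP) : ~ P s -> phi s *: y = psi m ->
  exists t, y = t *: psi m.
Proof.
move=> ns Ey; have [t st1] := phi_unit ns.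
by exists t; rewrite -Ey scalerA mulrC st1 scale1r.
Qed.

Let preim (I : S -> Prop) : R -> Prop := fun r => I (phi r).

Let psi_eq0P m : psi m = 0 <-> exists u, ~ P u /\ u *: m = 0.
Proof.
split=> [|[u [nu um0]]]; first by case: psi_loc => _ _ _; apply.
by apply: (unit_scaleK nu); rewrite -psiZ um0 psi0.
Qed.

Let psi_modM (I : S -> Prop) m : modM (preim I) m -> modM I (psi m).
Proof.
move=> [s [Hs ->]]; exists [seq (phi p.1, psi p.2) | p <- s]; rewrite psi_sum big_map.
by split=> // _ /mapP[p /Hs Ip ->].
Qed.

Let psi_scale_ann (I : S -> Prop) m s (y : MP) r :
  phi s *: y = psi m -> ann_elt I y -> I (phi r) -> psi (r *: m) = 0.
Proof. by move=> sy Iy Ir; rewrite psiZ -sy scalerA mulrC -scalerA Iy ?scaler0. Qed.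

(* Clearing denominators: writing [x = phi r / phi s1] and [w = psi n / phi t]
   gives [phi (s1 * t) *: (x *: w) = psi (r *: n)]. *)
Let scale_frac (I : S -> Prop) (x : S) (w : MP) : ideal I -> I x ->
  exists r n s, [/\ ~ P s, preim I r & phi s *: (x *: w) = psi (r *: n)].
Proof.
move=> HI Ix; have [r [s1 [ns1 xs1]]] := phi_frac x; have [n [t [nt tw]]] := psi_frac w.
exists r, n, (s1 * t); split; first exact: notP_mul.
- by rewrite /preim -xs1; apply: idealMr.
- rewrite psiZ -xs1 -tw rmorphM !scalerA; congr (_ *: _).
  by rewrite mulrC mulrA.
Qed.

Let ann_of_preim (I : S -> Prop) m s (y : MP) : ideal I -> ~ P s ->
  phi s *: y = psi m -> ann_elt (preim I) m -> ann_elt I y.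
Proof.
move=> HI ns sy Im x Ix; have [r [s1 [ns1 xs1]]] := phi_frac x.
apply: (unit_scaleK (notP_mul ns1 ns)).
have -> : phi (s1 * s) *: (x *: y) = phi r *: (phi s *: y).
  by rewrite rmorphM !scalerA -xs1; congr (_ *: _); rewrite mulrC mulrA.
by rewrite sy -psiZ Im ?psi0 // /preim -xs1; apply: idealMr.
Qed.

Let localization_modM_sub (I K : S -> Prop) : ideal I -> ideal K ->
  (forall m : M, modM (preim K) m -> modM (preim I) m) ->
  forall z : MP, modM K z -> modM I z.
Proof.
move=> HI HK KI z; apply: modM_ind => [|? ?|x w Kx]; [exact: modM0 | exact: modMD |].
have [r [n [t [nt Kr tE]]]] := scale_frac w HK Kx.
have [t' ->] := unit_scale_psi nt tE.
by apply/modMZ/psi_modM/KI/modM_scale.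
Qed.

Lemma localization_prime_module : prime_module M -> prime_module MP.
Proof.
move=> pM I y HI Iy; have [m [s [ns sy]]] := psi_frac y.
have [m0 | m_neq0] := pselect (m = 0).
  by left; apply: (unit_scaleK ns); rewrite sy m0 psi0.
right=> z; apply: modM_eq0 => w x Ix; have [r [n [t [nt Ir tE]]]] := scale_frac w HI Ix.
apply: (unit_scaleK nt); rewrite tE.
have [u [nu urm0]] := (psi_eq0P _).1 (psi_scale_ann sy Iy Ir); rewrite scalerA in urm0.
have [/m_neq0 // | urn0] := prime_module_scale_eq0 pM n urm0.
by apply/psi_eq0P; exists u; rewrite scalerA.
Qed.

Lemma localization_weakly_prime_module :
  weakly_prime_module M -> weakly_prime_module MP.
Proof.
move=> wM I J y HI HJ IJy; have [m [s [ns sy]]] := psi_frac y.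
have [[q [nq qm0]] | mP] := pselect (exists q, ~ P q /\ q *: m = 0).
  have y0 : y = 0 by apply: (unit_scaleK ns); rewrite sy; apply/psi_eq0P; exists q.
  by left=> a _; rewrite y0 scaler0.
have IJm : ann_elt (idealM (preim I) (preim J)) m.
  apply: ann_idealM => a b Ia Jb.
  have IJab : idealM I J (phi (a * b)) by rewrite rmorphM; apply: idealM_mul.
  have [u [nu uabm0]] := (psi_eq0P _).1 (psi_scale_ann sy IJy IJab).
  rewrite scalerA in uabm0; have [um0 | //] := weakly_prime_module_scale_eq0 wM uabm0.
  by case: mP; exists u.
have [Im | Jm] := wM _ _ m (ideal_preim phi HI) (ideal_preim phi HJ) IJm.
- by left; apply: ann_of_preim HI ns sy Im.
- by right; apply: ann_of_preim HJ ns sy Jm.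
Qed.

Lemma localization_coprime_module : coprime_module M -> coprime_module MP.
Proof.
move=> cM I HI; have [IM0 | IM_full] := cM _ (ideal_preim phi HI).
- left=> z; apply: modM_eq0 => w x Ix; have [r [n [t [nt Ir tE]]]] := scale_frac w HI Ix.
  by apply: (unit_scaleK nt); rewrite tE (IM0 (r *: n)) ?psi0 //; apply: modM_scale.
- right=> z; have [n [t [nt tz]]] := psi_frac z; have [t' ->] := unit_scale_psi nt tz.
  exact/modMZ/psi_modM/IM_full.
Qed.

Lemma localization_weakly_coprime_module :
  weakly_coprime_module M -> weakly_coprime_module MP.
Proof.
move=> wM I J HI HJ; have HIJ := idealM_ideal HI HJ.
have preim_idealM a : idealM (preim I) (preim J) a -> preim (idealM I J) a.
  move=> [s [Hs ->]]; rewrite /preim rmorph_sum; apply: ideal_sum => // p /Hs[Ip Jp].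
  by rewrite rmorphM; apply: idealM_mul.
have [IJ_I | IJ_J] := wM _ _ (ideal_preim phi HI) (ideal_preim phi HJ); [left|right]=> z.
- split; first by apply: modM_sub => a; apply: idealM_subl.
  apply: localization_modM_sub => // m /IJ_I Im.
  exact: modM_sub Im.
- split; first by apply: modM_sub => a; apply: idealM_subr.
  apply: localization_modM_sub => // m /IJ_J Jm.
  exact: modM_sub Jm.
Qed.

End Localization.

Lemma coreduced_of_reduced (R : comPzRingType) (N : lmodType R) :
  cogenerator_module N -> reduced_module N -> coreduced_module N.
Proof.
move=> cogN rN I HI y; split=> [Iy|]; last by apply: modM_sub => a; apply: idealM_subl.
have HII := idealM_ideal HI HI; apply: contrapT => IIy.
have [f [fII fy]] := cogenerator_separates (K := modM_submodule N HII) cogN IIy.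
apply: fy; move: Iy; apply: (linear_kills_modM f I).2 => x.
by apply: rN => //; exact: (linear_kills_modM f (idealM I I)).1 fII x.
Qed.

Lemma weakly_coprime_of_weakly_prime (R : comPzRingType) (N : lmodType R) :
  cogenerator_module N -> weakly_prime_module N -> weakly_coprime_module N.
Proof.
move=> cogN wN I J HI HJ; pose IJN := modM_submodule N (idealM_ideal HI HJ).
have [IN_sub | /existsNP[y1 /not_implyP[Iy1 IJy1]]] :=
  pselect (forall y : N, modM I y -> modM (idealM I J) y).
  by left=> y; split=> [|/IN_sub//]; apply: modM_sub => a; apply: idealM_subl.
have [JN_sub | /existsNP[y2 /not_implyP[Jy2 IJy2]]] :=
  pselect (forall y : N, modM J y -> modM (idealM I J) y).
  by right=> y; split=> [|/JN_sub//]; apply: modM_sub => a; apply: idealM_subr.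
exfalso.
have [i [u [Ii IJiu]]] := modM_scale_notin (@submod0 _ _ IJN) (@submodD _ _ IJN) Iy1 IJy1.
have [j [v [Jj IJjv]]] := modM_scale_notin (@submod0 _ _ IJN) (@submodD _ _ IJN) Jy2 IJy2.
have [f [fIJ fiu]] := cogenerator_separates (K := IJN) cogN IJiu.
have [g [gIJ gjv]] := cogenerator_separates (K := IJN) cogN IJjv.
rewrite linearZ_LR in fiu; rewrite linearZ_LR in gjv.
have IJfu := (linear_kills_modM f (idealM I J)).1 fIJ u.
have IJgv := (linear_kills_modM g (idealM I J)).1 gIJ v.
have Jfu : ann_elt J (f u) by have [/(_ i Ii)/fiu|] := wN I J _ HI HJ IJfu.
have Igv : ann_elt I (g v) by have [|/(_ j Jj)/gjv] := wN I J _ HI HJ IJgv.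
have IJfg : ann_elt (idealM I J) (f u + g v).
  by move=> c IJc; rewrite scalerDr IJfu ?IJgv ?addr0.
have [/(_ i Ii) | /(_ j Jj)] := wN I J _ HI HJ IJfg; rewrite scalerDr.
- by rewrite Igv // addr0.
- by rewrite Jfu // add0r.
Qed.

Lemma generator_modM_sub (R : comPzRingType) (Q : lmodType R) (I J : R -> Prop) :
  generator_module Q -> ideal J -> (forall y : Q, modM I y -> modM J y) ->
  forall a, I a -> J a.
Proof.
move=> genQ HJ IJ a Ia; have [s s1] := genQ R^o 1.
rewrite -[a]mulr1 s1 mulr_sumr.
apply: (big_ind J) => [|x y|p _]; [exact: ideal0 | exact: idealD |].
have -> : a * p.1 p.2 = p.1 (a *: p.2) by rewrite linearZ_LR.
have [t [Ht ->]] := IJ (a *: p.2) (modM_scale _ Ia).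
rewrite linear_sum; apply: (ideal_sum (I := J)) => // q /Ht Jq.
by rewrite linearZ_LR; apply: idealMr.
Qed.

Lemma reduced_of_coreduced (R : comPzRingType) (Q : lmodType R) :
  generator_module Q -> coreduced_module Q -> reduced_module Q.
Proof.
move=> genQ cQ I m HI IIm a Ia; apply: IIm.
by apply: (generator_modM_sub genQ (idealM_ideal HI HI)) Ia => y /(cQ I HI).
Qed.

Lemma weakly_prime_of_weakly_coprime (R : comPzRingType) (Q : lmodType R) :
  generator_module Q -> weakly_coprime_module Q -> weakly_prime_module Q.
Proof.
move=> genQ wQ I J m HI HJ IJm; have HIJ := idealM_ideal HI HJ.
have [IJ_I | IJ_J] := wQ I J HI HJ; [left | right] => a Ka; apply: IJm.
- by apply: (generator_modM_sub genQ HIJ) Ka => y /IJ_I.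
- by apply: (generator_modM_sub genQ HIJ) Ka => y /IJ_J.
Qed.

Unset Implicit Arguments.
Set Strict Implicit.

Theorem mainTheorem9 (R : comPzRingType) :
  (* (1) *)
  ((forall (M N : lmodType R), coprime_module M -> prime_module (HomMod M N)) /\
   (forall (M N : lmodType R), injective_module N -> cogenerator_module N ->
      prime_module (HomMod M N) -> coprime_module M)) /\
  (* (2) *)
  (noetherian R -> forall (M N : lmodType R),
      injective_module N -> cogenerator_module N -> prime_module M ->
      coprime_module (HomMod M N)) /\
  (* (3) *)
  (forall (M : lmodType R) (P : R -> Prop), prime_ideal P ->
   forall (S : comPzRingType) (phi : {rmorphism R -> S}),
     is_localization_ring P phi ->
   forall (MP : lmodType S) (psi : M -> MP),
     is_localization_module P phi psi ->
     [/\ prime_module M -> prime_module MP,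
         weakly_prime_module M -> weakly_prime_module MP,
         coprime_module M -> coprime_module MP &
         weakly_coprime_module M -> weakly_coprime_module MP]) /\
  (* (4) *)
  (forall N : lmodType R, injective_module N -> cogenerator_module N ->
     (reduced_module N -> coreduced_module N) /\
     (weakly_prime_module N -> weakly_coprime_module N)) /\
  (* (5) *)
  (forall Q : lmodType R, progenerator_module Q ->
     (coreduced_module Q -> reduced_module Q) /\
     (weakly_coprime_module Q -> weakly_prime_module Q)).
Proof.
split; [split | split; [|split; [|split]]].
- by move=> M N; apply: hom_prime_of_coprime.
- by move=> M N _; apply: coprime_of_hom_prime.
- by move=> _ M N injN _; apply: hom_coprime_of_prime.
- move=> M P P_prime S phi phi_loc MP psi psi_loc; split.
  + exact: localization_prime_module P_prime phi_loc psi_loc.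
  + exact: localization_weakly_prime_module P_prime phi_loc psi_loc.
  + exact: localization_coprime_module P_prime phi_loc psi_loc.
  + exact: localization_weakly_coprime_module P_prime phi_loc psi_loc.
- move=> N _ cogN; split; first exact: coreduced_of_reduced.
  exact: weakly_coprime_of_weakly_prime.
- move=> Q [_ _ genQ]; split; first exact: reduced_of_coreduced.
  exact: weakly_prime_of_weakly_coprime.
Qed.
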